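(* Let $X,Y$ be Banach spaces and let $T:X\to Y$ be a hereditary-SCD-operator. Then for every $x^*\in X^*$ the operator $T\tilde{+}\mathrm{Re}\,x^*:X\to Y\oplus_1\mathbb{R}$, $x\mapsto(Tx,\mathrm{Re}\,x^*(x))$, is an SCD-operator, i.e. $[T\tilde{+}\mathrm{Re}\,x^*](B_X)$ is an SCD set.
   Context: $B_X$ is the closed unit ball of $X$. $Y\oplus_1\mathbb{R}$ is the direct sum (viewed as a real Banach space) with norm $\|(y,t)\|=\|y\|+|t|$. A slice of a convex bounded set $A$ is $S(A,z^*,\varepsilon)=\{a\in A:\ \mathrm{Re}\,z^*(a)>\sup\mathrm{Re}\,z^*(A)-\varepsilon\}$; $A$ is an SCD set if there is a sequence $(S_n)$ of slices of $A$ such that $A\subseteq\overline{\mathrm{conv}}(B)$ for every $B\subseteq A$ intersecting all the $S_n$. An operator $S:X\to Z$ is an SCD-operator if $S(B_X)$ is an SCD set; $T:X\to Y$ is a hereditary-SCD-operator if every convex subset of $T(B_X)$ is an SCD set. *)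

From HB Require Import structures.
From mathcomp Require Import all_boot all_order all_algebra.
From mathcomp Require Import all_classical all_reals all_analysis.
Set Implicit Arguments. Unset Strict Implicit. Unset Printing Implicit Defensive.
Import Order.TTheory GRing.Theory Num.Theory.
Import numFieldNormedType.Exports.
Local Open Scope classical_set_scope.
Local Open Scope ring_scope.

(* Generic framework: a real vector space V together with a norm function
   N : V -> R.  This lets us treat both the norm of a normed space and the
   l1-norm of Y (+)_1 R uniformly and literally. *)

Section SCD.
Variables (R : realType) (V : lmodType R) (N : V -> R).

Definition bdd_functional (f : {linear V -> R^o}) : Prop :=
  exists C : R, forall v, `|f v| <= C * N v.

Definition convex_set_in (A : set V) : Prop :=
  forall a b (t : R), A a -> A b -> 0 <= t <= 1 -> A (t *: a + (1 - t) *: b).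

Definition bounded_in (A : set V) : Prop :=
  exists M : R, forall a, A a -> N a <= M.

Definition conv_hull (B : set V) : set V :=
  [set z | exists (n : nat) (w : 'I_n -> R) (b : 'I_n -> V),
     (forall i, 0 <= w i /\ B (b i)) /\ \sum_(i < n) w i = 1 /\
     z = \sum_(i < n) w i *: b i].

Definition closed_conv_hull (B : set V) : set V :=
  [set z | forall e : R, 0 < e -> exists2 c, conv_hull B c & N (z - c) < e].

Definition slice (A : set V) (f : {linear V -> R^o}) (eps : R) : set V :=
  [set a | A a /\ sup [set f x | x in A] - eps < f a].

Definition SCD_set (A : set V) : Prop :=
  convex_set_in A /\ bounded_in A /\
  exists (f : nat -> {linear V -> R^o}) (eps : nat -> R),
    (forall n, bdd_functional (f n) /\ 0 < eps n) /\
    forall B : set V, B `<=` A ->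
      (forall n, B `&` slice A (f n) (eps n) !=set0) ->
      A `<=` closed_conv_hull B.
End SCD.

Definition unit_ball (R : realType) (X : normedModType R) : set X :=
  [set x | `|x| <= 1].

Definition SCD_operator (R : realType) (X : normedModType R) (Z : lmodType R)
  (NZ : Z -> R) (S : X -> Z) : Prop :=
  SCD_set NZ (S @` @unit_ball _ X).

Definition hereditary_SCD_operator (R : realType) (X Y : normedModType R)
  (T : X -> Y) : Prop :=
  forall A : set Y, A `<=` T @` @unit_ball _ X ->
    convex_set_in A -> SCD_set (fun y : Y => `|y|) A.

Definition l1_norm (R : realType) (Y : normedModType R) (p : (Y * R^o)%type) : R :=
  `|p.1| + `|p.2|.

Definition op_sum (R : realType) (X Y : normedModType R)
  (T : X -> Y) (f : X -> R^o) : X -> (Y * R^o)%type :=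
  fun x => (T x, f x).

From HB Require Import structures.
From mathcomp Require Import all_boot all_order all_algebra.
From mathcomp Require Import all_classical all_reals all_analysis.
From mathcomp Require Import ring lra.
Import Order.TTheory GRing.Theory Num.Theory.
Import numFieldNormedType.Exports.
Local Open Scope classical_set_scope.
Local Open Scope ring_scope.
Set Implicit Arguments. Unset Strict Implicit. Unset Printing Implicit Defensive.

(* Since T is hereditary-SCD, each convex set T({x in B_X : t < ±x*(x)}) with t
   rational is SCD.  A determining slice of it, given by y* and eps, is lifted to
   finitely many slices of K = {(T x, x*(x)) : x in B_X}, namely those of the
   functionals th (±r) + (1 - th) y* for th on a fine grid of [0, 1]: if B meets
   all of them, a discrete intermediate value argument along the grid gives a
   convex combination of two points of B lying both in {t < ±r} and in the
   y*-slice.  Collecting these countably many slices, a set B meeting all of them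
   has, for every rational t, convex combinations above (resp. below) the level t
   in the real coordinate whose Y-parts are dense in the corresponding cut; mixing
   one combination from each side approximates any point of K in the l1-norm. *)
Section ConvexHull.
Variables (R : realType) (V : lmodType R).

Lemma conv_comb_gt (t x y a : R) :
  0 <= t <= 1 -> a < x -> a < y -> a < t * x + (1 - t) * y.
Proof.
move=> /andP[t0 t1] ax ay.
have [->|t_neq0] := eqVneq t 0; first by rewrite mul0r add0r subr0 mul1r.
have t_gt0 : 0 < t by rewrite lt0r t_neq0 t0.
have : t * a < t * x by rewrite ltr_pM2l.
have : (1 - t) * a <= (1 - t) * y by apply: ler_wpM2l; [lra | apply: ltW].
lra.
Qed.

Lemma convex_set_inI (A B : set V) :
  convex_set_in A -> convex_set_in B -> convex_set_in (A `&` B).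
Proof. by move=> cA cB a b t [Aa Ba] [Ab Bb] t01; split; [apply: cA | apply: cB]. Qed.

Lemma convex_set_in_gt (f : {linear V -> R^o}) (a : R) :
  convex_set_in [set v | a < f v].
Proof. by move=> x y t ax ay t01 /=; rewrite linearD !linearZ; exact: conv_comb_gt. Qed.

Lemma convex_set_in_image (W : lmodType R) (f : {linear V -> W}) (C : set V) :
  convex_set_in C -> convex_set_in (f @` C).
Proof.
move=> cC _ _ t [a Ca <-] [b Cb <-] t01.
by exists (t *: a + (1 - t) *: b); [exact: cC | rewrite linearD !linearZ].
Qed.

Lemma convex_set_in_sum (C : set V) : convex_set_in C ->
  forall n (w : 'I_n -> R) (b : 'I_n -> V),
  (forall i, 0 <= w i /\ C (b i)) -> \sum_(i < n) w i = 1 ->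
  C (\sum_(i < n) w i *: b i).
Proof.
move=> cC; elim=> [|n IH] w b wb sum_w.
  by move: sum_w; rewrite big_ord0 => /eqP; rewrite eq_sym oner_eq0.
rewrite big_ord_recr /=; rewrite big_ord_recr /= in sum_w.
pose w' (i : 'I_n) := w (widen_ord (leqnSn n) i).
pose b' (i : 'I_n) := b (widen_ord (leqnSn n) i).
have w'_ge0 i : 0 <= w' i by case: (wb (widen_ord (leqnSn n) i)).
have [wm_ge0 Cbm] := wb ord_max.
set s := \sum_(i < n) w' i in sum_w.
have s_ge0 : 0 <= s by apply: sumr_ge0.
have [s0|s_neq0] := eqVneq s 0.
  have wm1 : w ord_max = 1 by rewrite -sum_w s0 add0r.
  rewrite big1 ?add0r ?wm1 ?scale1r // => i _.
  have -> : w (widen_ord (leqnSn n) i) = 0.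
    exact: (psumr_eq0P (P := xpredT) (fun i _ => w'_ge0 i) s0 isT).
  by rewrite scale0r.
have s_gt0 : 0 < s by rewrite lt0r s_neq0 s_ge0.
have -> : \sum_(i < n) w' i *: b' i = s *: \sum_(i < n) (w' i / s) *: b' i.
  by rewrite scaler_sumr; apply: eq_bigr => i _; rewrite scalerA mulrC divfK.
have -> : w ord_max = 1 - s by lra.
apply: cC => //; last by rewrite (ltW s_gt0) /=; lra.
apply: IH; last by rewrite -mulr_suml divff.
move=> i; case: (wb (widen_ord (leqnSn n) i)) => _ Cb; split => //.
by rewrite divr_ge0 // ltW.
Qed.

Lemma conv_hull_mem (B : set V) b : B b -> conv_hull B b.
Proof.
move=> Bb; exists 1%N, (fun _ => 1), (fun _ => b).
by rewrite !big_ord1 scale1r.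
Qed.

Lemma conv_hull_convex (B : set V) : convex_set_in (conv_hull B).
Proof.
move=> a c t [n [w [b [wb [sw ->]]]]] [m [w' [b' [wb' [sw' ->]]]]] /andP[t0 t1].
pose W (i : 'I_(n + m)) := match fintype.split i with
  | inl i => t * w i | inr j => (1 - t) * w' j end.
pose Bb (i : 'I_(n + m)) := match fintype.split i with
  | inl i => b i | inr j => b' j end.
have splitl (i : 'I_n) : fintype.split (lshift m i) = inl i by exact: (unsplitK (inl i)).
have splitr (j : 'I_m) : fintype.split (rshift n j) = inr j by exact: (unsplitK (inr j)).
exists (n + m)%N, W, Bb; split; [|split].
- move=> i; rewrite /W /Bb; case: (fintype.split i) => k.
    by case: (wb k) => w0 Bk; split => //; apply: mulr_ge0.
  by case: (wb' k) => w0 Bk; split => //; apply: mulr_ge0; lra.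
- rewrite big_split_ord /=.
  under eq_bigr do rewrite /W splitl.
  under [X in _ + X]eq_bigr do rewrite /W splitr.
  by rewrite -!mulr_sumr sw sw' !mulr1 addrC subrK.
- rewrite big_split_ord /= !scaler_sumr.
  by congr (_ + _); apply: eq_bigr => i _; rewrite /W /Bb ?splitl ?splitr scalerA.
Qed.

Lemma conv_hull_min (B C : set V) : convex_set_in C -> B `<=` C ->
  conv_hull B `<=` C.
Proof.
move=> cC BC z [n [w [b [wb [sw ->]]]]]; apply: convex_set_in_sum => // i.
by case: (wb i) => w0 Bb; split => //; apply: BC.
Qed.

Lemma conv_hull_image (W : lmodType R) (f : {linear V -> W}) (C : set V) :
  convex_set_in C -> conv_hull (f @` C) `<=` f @` C.
Proof.
move=> cC _ [n [w [b [wb [sw ->]]]]].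
have /choice [c fc] : forall i : 'I_n, exists c, C c /\ f c = b i.
  by move=> i; case: (wb i) => _ [c Cc <-]; exists c.
exists (\sum_(i < n) w i *: c i).
  by apply: convex_set_in_sum => // i; split; [case: (wb i) | case: (fc i)].
by rewrite linear_sum; apply: eq_bigr => i _; rewrite linearZ; case: (fc i) => _ ->.
Qed.

End ConvexHull.

Lemma first_crossing (P : pred nat) N : P N ->
  P 0%N \/ exists2 j, (j < N)%N & ~~ P j /\ P j.+1.
Proof.
elim: N => [|N IH] PN; first by left.
have [PN'|NPN] := boolP (P N); last by right; exists N.
by case: (IH PN') => [|[j jN Pj]]; [left | right; exists j; first exact: ltnW].
Qed.

Section DiscreteCrossing.
Variable R : realType.

Lemma two_point_mix_pos (th ka ax bx ay by_ : R) :
  0 <= th -> th < 1 -> 0 < ka -> ax <= 0 -> 0 < ay ->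
  ka < th * ax + (1 - th) * bx -> ka < th * ay + (1 - th) * by_ ->
  exists2 la, 0 <= la <= 1 &
    0 < la * ax + (1 - la) * ay /\ 0 < la * bx + (1 - la) * by_.
Proof.
move=> th_ge0 th_lt1 ka_gt0 ax_le0 ay_gt0 x_gt y_gt.
(* Make the first coordinate positive but at most ka/2; the second follows. *)
have [la la01 [a_gt0 a_le]] : exists2 la, 0 <= la <= 1 &
    0 < la * ax + (1 - la) * ay /\ la * ax + (1 - la) * ay <= ka / 2.
  have [ay_le|ay_gt] := leP ay (ka / 2).
    by exists 0; rewrite ?lexx ?ler01 // mul0r add0r subr0 mul1r.
  exists ((ay - ka / 2) / (ay - ax)).
    by rewrite divr_ge0 ?ler_pdivrMr /=; lra.
  have -> : (ay - ka / 2) / (ay - ax) * ax + (1 - (ay - ka / 2) / (ay - ax)) * ay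
      = ka / 2 by field; apply/eqP; lra.
  by split; lra.
have := conv_comb_gt la01 x_gt y_gt.
have -> : la * (th * ax + (1 - th) * bx) + (1 - la) * (th * ay + (1 - th) * by_) =
  th * (la * ax + (1 - la) * ay) + (1 - th) * (la * bx + (1 - la) * by_) by ring.
have : th * (la * ax + (1 - la) * ay) <= ka / 2 by nra.
move=> th_a_le comb_gt; exists la => //; split => //.
have th1_gt0 : 0 < 1 - th by lra.
by rewrite -(pmulr_rgt0 _ th1_gt0); lra.
Qed.

Lemma grid_two_point_mix_pos (a b : nat -> R) (N : nat) (ka M : R) :
  (0 < N)%N -> 0 < ka -> 4 * M < ka * N%:R ->
  (forall i, (i <= N)%N -> `|a i| <= M /\ `|b i| <= M) ->
  (forall i, (i <= N)%N -> ka < i%:R / N%:R * a i + (1 - i%:R / N%:R) * b i) ->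
  exists i j la, [/\ (i <= N)%N, (j <= N)%N, 0 <= la <= 1,
    0 < la * a i + (1 - la) * a j & 0 < la * b i + (1 - la) * b j].
Proof.
move=> N_gt0 ka_gt0 MN ab_le ab_gt.
have Nr_gt0 : 0 < N%:R :> R by rewrite ltr0n.
have aN_gt0 : 0 < a N.
  by have := ab_gt N (leqnn N); rewrite divff ?pnatr_eq0 -?lt0n // subrr; lra.
have [a0_gt0 | [j jN [aj_le aj1_gt]]] := first_crossing (P := fun i => 0 < a i) aN_gt0.
  exists 0%N, 0%N, 1; rewrite ler01 lexx subrr !mul0r !addr0 !mul1r; split => //.
  by have := ab_gt 0%N (leq0n N); rewrite !(mul0r, add0r, subr0, mul1r); lra.
pose th := j%:R / N%:R : R.
have th_ge0 : 0 <= th by rewrite divr_ge0.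
have th_lt1 : th < 1 by rewrite ltr_pdivrMr // mul1r ltr_nat.
have thS : j.+1%:R / N%:R = th + 1 / N%:R by rewrite -mulrDl -natr1.
have ka2_gt0 : 0 < ka / 2 by lra.
have gt0 : ka / 2 < th * a j + (1 - th) * b j.
  by have := ab_gt j (ltnW jN); rewrite -/th; lra.
(* Moving from j.+1 / N down to j / N costs at most 2M / N < ka / 2. *)
have gt1 : ka / 2 < th * a j.+1 + (1 - th) * b j.+1.
  have [aM bM] := ab_le j.+1 jN.
  have shift : 1 / N%:R * (a j.+1 - b j.+1) <= ka / 2.
    rewrite mul1r mulrC ler_pdivrMr //.
    by move: aM bM; rewrite !ler_norml => /andP[? ?] /andP[? ?]; lra.
  have := ab_gt j.+1 jN; rewrite thS.
  have -> : (th + 1 / N%:R) * a j.+1 + (1 - (th + 1 / N%:R)) * b j.+1 =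
    th * a j.+1 + (1 - th) * b j.+1 + 1 / N%:R * (a j.+1 - b j.+1) by ring.
  lra.
rewrite -leNgt in aj_le.
have [la la01 [ha hb]] := two_point_mix_pos th_ge0 th_lt1 ka2_gt0 aj_le aj1_gt gt0 gt1.
by exists j, j.+1, la; split => //; exact: ltnW.
Qed.

End DiscreteCrossing.

Section TwoHalfspaces.
Variables (R : realType) (V : lmodType R).

Definition mix_functional (al be : {linear V -> R^o}) (th : R) : {linear V -> R^o} :=
  (th \*: al) \+ ((1 - th) \*: be).

Lemma mix_functionalE al be th v :
  mix_functional al be th v = th * al v + (1 - th) * be v.
Proof. by []. Qed.

Lemma bdd_mix_functional (Nm : V -> R) al be th :
  bdd_functional Nm al -> bdd_functional Nm be ->
  bdd_functional Nm (mix_functional al be th).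
Proof.
move=> [C1 alC1] [C2 beC2]; exists (`|th| * C1 + `|1 - th| * C2) => v.
rewrite mix_functionalE [X in _ <= X]mulrDl -!mulrA.
apply: (le_trans (ler_normD _ _)); rewrite !normrM.
by apply: lerD; apply: ler_wpM2l.
Qed.

Lemma slice_lt (A : set V) (f : {linear V -> R^o}) (M eps : R) p q :
  (forall v, A v -> f v <= M) -> A p -> slice A f eps q -> f p - eps < f q.
Proof.
move=> fM Ap [_ Sq]; apply: le_lt_trans Sq; rewrite lerD2r.
apply: sup_upper_bound; last by exists p.
split; first by exists (f p), p.
by exists M => _ [v Av <-]; exact: fM.
Qed.

Lemma conv_hull_meets_halfspaces (K : set V) (al be : {linear V -> R^o})
    (M a0 b0 : R) p :
  (forall v, K v -> `|al v| <= M /\ `|be v| <= M) -> K p -> a0 < al p -> b0 < be p ->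
  exists N (eta : R), 0 < eta /\ forall B, B `<=` K ->
    (forall i, (i <= N)%N ->
       B `&` slice K (mix_functional al be (i%:R / N%:R)) eta !=set0) ->
    exists2 z, conv_hull B z & a0 < al z /\ b0 < be z.
Proof.
move=> KM Kp alp bep.
pose m := Num.min (al p - a0) (be p - b0).
have m_gt0 : 0 < m by rewrite lt_min !subr_gt0 alp bep.
have [m_al m_be] : m <= al p - a0 /\ m <= be p - b0 by rewrite !ge_min !lexx ?orbT.
pose Mg := M + `|a0| + `|b0|.
have Mg_ge0 : 0 <= Mg.
  by have [alM _] := KM p Kp; have := normr_ge0 (al p); have := normr_ge0 a0;
    have := normr_ge0 b0; rewrite /Mg; lra.
have [N [N_gt0 MN]] : exists N, (0 < N)%N /\ 4 * Mg < m / 2 * N%:R.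
  have bound_ge0 : 0 <= 8 * Mg / m by apply: divr_ge0; lra.
  have := archi_boundP bound_ge0; set N := Num.Def.archi_bound _ => lt_N.
  exists N; split; first by rewrite -(ltr0n R); exact: le_lt_trans lt_N.
  by move: lt_N; rewrite ltr_pdivrMr //; lra.
exists N, (m / 2); split=> [|B BK Bslices]; first by lra.
have /choice [q qP] : forall i, exists q, (i <= N)%N ->
    B q /\ slice K (mix_functional al be (i%:R / N%:R)) (m / 2) q.
  move=> i; have [iN|] := boolP (i <= N)%N; last by exists p.
  by have [q] := Bslices i iN; exists q.
have Kq i : (i <= N)%N -> K (q i) by move=> /qP[/BK].
have m2_gt0 : 0 < m / 2 by lra.
have [||i [j [la [iN jN la01 a_gt0 b_gt0]]]] :=
  grid_two_point_mix_pos (a := fun i => al (q i) - a0) (b := fun i => be (q i) - b0)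
    N_gt0 m2_gt0 MN.
- move=> i /Kq /KM [alM beM].
  by split; apply: (le_trans (ler_normB _ _)); rewrite /Mg;
    have := normr_ge0 a0; have := normr_ge0 b0; lra.
- move=> i iN; set th := i%:R / N%:R.
  have th_ge0 : 0 <= th by rewrite divr_ge0.
  have th_le1 : th <= 1 by rewrite ler_pdivrMr ?ltr0n // mul1r ler_nat.
  have mixM v : K v -> mix_functional al be th v <= M.
    move=> /KM [/ler_normlP[_ alM] /ler_normlP[_ beM]]; rewrite mix_functionalE.
    have : th * al v <= th * M by rewrite ler_wpM2l.
    have : (1 - th) * be v <= (1 - th) * M by rewrite ler_wpM2l // subr_ge0.
    lra.
  have := slice_lt mixM Kp (proj2 (qP i iN)); rewrite !mix_functionalE.
  have : th * m <= th * (al p - a0) by rewrite ler_wpM2l.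
  have : (1 - th) * m <= (1 - th) * (be p - b0) by rewrite ler_wpM2l // subr_ge0.
  lra.
exists (la *: q i + (1 - la) *: q j).
  apply: conv_hull_convex => //; apply: conv_hull_mem.
    by have [] := qP i iN.
  by have [] := qP j jN.
have comb (f : {linear V -> R^o}) :
    f (la *: q i + (1 - la) *: q j) = la * f (q i) + (1 - la) * f (q j).
  by rewrite linearD !linearZ.
by move: a_gt0 b_gt0; rewrite /= !comb; split; lra.
Qed.

End TwoHalfspaces.

Lemma SCD_set_countable (R : realType) (V : lmodType R) (Nm : V -> R) (A : set V)
    (I : countType) (k0 : I) (f : I -> {linear V -> R^o}) (eps : I -> R) :
  convex_set_in A -> bounded_in Nm A ->
  (forall k, bdd_functional Nm (f k) /\ 0 < eps k) ->
  (forall B, B `<=` A -> (forall k, B `&` slice A (f k) (eps k) !=set0) ->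
     A `<=` closed_conv_hull Nm B) ->
  SCD_set Nm A.
Proof.
move=> cA bA feps det; split=> //; split=> //.
pose idx n := odflt k0 (unpickle n).
exists (f \o idx), (eps \o idx); split=> [n|B BA Bn]; first exact: feps.
by apply: det => // k; have := Bn (pickle k); rewrite /= /idx pickleK.
Qed.

Section NormedSpaces.
Variable R : realType.

Lemma continuous_linear_bound (V W : normedModType R) (f : {linear V -> W}) :
  continuous f -> exists2 C : R, 0 <= C & forall x, `|f x| <= C * `|x|.
Proof.
move=> /(_ 0)/(continuous_linear_bounded 0)/linear_boundedP[M [_ fM]].
exists (`|M| + 1) => [|x]; first by rewrite addr_ge0.
by apply: fM; have := ler_norm M; lra.
Qed.

Lemma unit_ball_convex (V : normedModType R) : convex_set_in (@unit_ball R V).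
Proof.
move=> x y t x1 y1 /andP[t0 t1]; rewrite /unit_ball /=.
apply: (le_trans (ler_normD _ _)); rewrite !normrZ (ger0_norm t0) ger0_norm ?subr_ge0 //.
have : t * `|x| <= t * 1 by rewrite ler_wpM2l.
have : (1 - t) * `|y| <= (1 - t) * 1 by rewrite ler_wpM2l ?subr_ge0.
lra.
Qed.

Lemma l1_norm_conv_approx (Y : normedModType R) (D : set (Y * R^o))
    (y : Y) (s e : R) z1 z2 :
  convex_set_in D -> D z1 -> D z2 ->
  `|y - z1.1| < e / 2 -> `|y - z2.1| < e / 2 -> s - e / 2 < z1.2 -> z2.2 < s + e / 2 ->
  exists2 z, D z & l1_norm ((y, s) - z) < e.
Proof.
move=> cD Dz1 Dz2 yz1 yz2 sz1 sz2; rewrite /l1_norm.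
have [z1_lt|z1_ge] := ltP z1.2 (s + e / 2).
  exists z1 => //=; have : `|s - z1.2| < e / 2 by rewrite ltr_norml; lra.
  lra.
have [z2_gt|z2_le] := ltP (s - e / 2) z2.2.
  exists z2 => //=; have : `|s - z2.2| < e / 2 by rewrite ltr_norml; lra.
  lra.
(* Both points overshoot: mix them so that the real coordinate is exactly s. *)
pose la := (s - z2.2) / (z1.2 - z2.2).
have la_ge0 : 0 <= la by rewrite divr_ge0 //; lra.
have la_le1 : la <= 1 by rewrite ler_pdivrMr; lra.
exists (la *: z1 + (1 - la) *: z2); first by apply: cD; rewrite ?la_ge0.
rewrite /=.
have -> : la *: z1.2 + (1 - la) *: z2.2 = s.
  rewrite -[LHS]/(la * z1.2 + (1 - la) * z2.2 : R) /la.
  by field; apply/eqP; lra.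
have -> : y - (la *: z1.1 + (1 - la) *: z2.1) = la *: (y - z1.1) + (1 - la) *: (y - z2.1).
  by rewrite !scalerBr addrACA -scalerDl (addrC la) subrK scale1r opprD.
rewrite subrr normr0 addr0; apply: (le_lt_trans (ler_normD _ _)).
rewrite (normrZ la) (normrZ (1 - la)) (ger0_norm la_ge0) ger0_norm ?subr_ge0 //.
have : la * `|y - z1.1| <= la * (e / 2) by rewrite ler_wpM2l // ltW.
have : (1 - la) * `|y - z2.1| <= (1 - la) * (e / 2) by rewrite ler_wpM2l ?subr_ge0 // ltW.
have := normr_ge0 (y - z1.1); lra.
Qed.

Lemma bdd_l1_norm_sign_snd (Y : normedModType R) (sg : bool) :
  bdd_functional (@l1_norm R Y) ((-1) ^+ sg \*: snd).
Proof.
exists 1 => v; rewrite /= normrZ normr_sign !mul1r /l1_norm.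
by rewrite lerDr normr_ge0.
Qed.

Lemma bdd_l1_norm_comp_fst (Y : normedModType R) (z : {linear Y -> R^o}) :
  bdd_functional (fun y : Y => `|y|) z -> bdd_functional (@l1_norm R Y) (z \o fst).
Proof.
move=> [C zC]; exists `|C| => v; rewrite /l1_norm /=.
apply: (le_trans (zC _)); apply: (le_trans (ler_wpM2r (normr_ge0 _) (ler_norm C))).
by rewrite ler_wpM2l // lerDl.
Qed.

End NormedSpaces.

Section SumWithFunctional.
Variables (R : realType) (X Y : normedModType R).
Variables (T : {linear X -> Y}) (xs : {linear X -> R^o}).

Let K := op_sum T xs @` @unit_ball R X.

Definition cut_image (sg : bool) (t : R) : set Y :=
  T @` (@unit_ball R X `&` [set x | t < (-1) ^+ sg *: xs x]).

Definition cut_hull (B : set (Y * R^o)) (sg : bool) (t : R) : set Y :=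
  fst @` (conv_hull B `&` [set w | t < (-1) ^+ sg *: w.2]).

Lemma op_sum_ball_convex : convex_set_in K.
Proof.
move=> _ _ t [x x1 <-] [y y1 <-] t01.
exists (t *: x + (1 - t) *: y); first exact: unit_ball_convex.
by rewrite /op_sum !linearD !linearZ.
Qed.

Lemma cut_hull_sub B sg t : B `<=` K -> cut_hull B sg t `<=` cut_image sg t.
Proof.
move=> BK _ [w [Bw wt] <-].
have [x x1 xw] := conv_hull_min op_sum_ball_convex BK Bw.
by exists x; [split=> //; move: wt; rewrite -xw | rewrite -xw].
Qed.

Hypotheses (cT : continuous T) (cxs : continuous xs).

Lemma op_sum_ball_bounded : bounded_in (@l1_norm R Y) K.
Proof.
have [CT CT_ge0 TC] := continuous_linear_bound cT.
have [Cx Cx_ge0 xsC] := continuous_linear_bound cxs.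
exists (CT + Cx) => _ [x x1 <-]; rewrite /l1_norm /=.
have := le_trans (TC x) (ler_piMr CT_ge0 x1).
have := le_trans (xsC x) (ler_piMr Cx_ge0 x1).
lra.
Qed.

Lemma cut_image_SCD (hT : hereditary_SCD_operator T) sg t :
  SCD_set (fun y : Y => `|y|) (cut_image sg t).
Proof.
apply: hT; first by move=> _ [x [x1 _] <-]; exists x.
apply: convex_set_in_image; apply: convex_set_inI; first exact: unit_ball_convex.
exact: (convex_set_in_gt (f := (-1) ^+ sg \*: xs)).
Qed.

Lemma cut_slice_lift sg t (z : {linear Y -> R^o}) eps :
  bdd_functional (fun y : Y => `|y|) z -> 0 < eps -> cut_image sg t !=set0 ->
  exists N (eta : R), 0 < eta /\ forall B, B `<=` K ->
    (forall i, (i <= N)%N -> B `&` slice K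
       (mix_functional ((-1) ^+ sg \*: snd) (z \o fst) (i%:R / N%:R)) eta !=set0) ->
    cut_hull B sg t `&` slice (cut_image sg t) z eps !=set0.
Proof.
move=> [Cz zC] eps_gt0 [y0 cut_y0].
have [CT CT_ge0 TC] := continuous_linear_bound cT.
have [Cx Cx_ge0 xsC] := continuous_linear_bound cxs.
have zT x : `|x| <= 1 -> `|z (T x)| <= `|Cz| * CT.
  move=> x1; apply: (le_trans (zC _)).
  apply: (le_trans (ler_wpM2r (normr_ge0 _) (ler_norm Cz))).
  by rewrite ler_wpM2l // (le_trans (TC x)) // ler_piMr.
have sup_cut : has_sup [set z y | y in cut_image sg t].
  split; first by exists (z y0), y0.
  exists (`|Cz| * CT) => _ [_ [x [x1 _] <-] <-].
  exact: le_trans (ler_norm _) (zT x x1).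
have [_ [_ [x [x1 xt] <-] <-] near_sup] := sup_adherent eps_gt0 sup_cut.
have K_bound v : K v -> `|((-1) ^+ sg \*: snd) v| <= Cx + `|Cz| * CT /\
    `|(z \o fst) v| <= Cx + `|Cz| * CT.
  move=> [x' x'1 <-]; rewrite /= normrZ normr_sign mul1r.
  have := le_trans (xsC x') (ler_piMr Cx_ge0 x'1).
  have := zT x' x'1; have := normr_ge0 Cz; have := mulr_ge0 (normr_ge0 Cz) CT_ge0.
  by split; lra.
have [N [eta [eta_gt0 lift]]] := conv_hull_meets_halfspaces K_bound
  (ex_intro2 _ _ x x1 erefl) xt near_sup.
exists N, eta; split=> // B BK Bslices.
have [w Bw [wt wz]] := lift B BK Bslices.
by exists w.1; split; [exists w | split; [apply: cut_hull_sub BK _ _; exists w |]].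
Qed.

Lemma op_sum_ball_slices (hT : hereditary_SCD_operator T) :
  exists (f : bool * rat * nat * nat -> {linear (Y * R^o)%type -> R^o})
         (eta : bool * rat * nat * nat -> R),
    (forall k, bdd_functional (@l1_norm R Y) (f k) /\ 0 < eta k) /\
    forall B, B `<=` K -> (forall k, B `&` slice K (f k) (eta k) !=set0) ->
    forall sg (t : rat), cut_image sg (ratr t) `<=`
      closed_conv_hull (fun y : Y => `|y|) (cut_hull B sg (ratr t)).
Proof.
have /choice[S S_det] : forall st : bool * rat,
    exists S : (nat -> {linear Y -> R^o}) * (nat -> R),
    (forall n, bdd_functional (fun y : Y => `|y|) (S.1 n) /\ 0 < S.2 n) /\
    forall B, B `<=` cut_image st.1 (ratr st.2) ->
      (forall n, B `&` slice (cut_image st.1 (ratr st.2)) (S.1 n) (S.2 n) !=set0) ->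
      cut_image st.1 (ratr st.2) `<=` closed_conv_hull (fun y : Y => `|y|) B.
  move=> [sg t]; have [_ [_ [f [eps det]]]] := cut_image_SCD hT sg (ratr t).
  by exists (f, eps).
have /choice[L L_lift] : forall k : bool * rat * nat, exists L : nat * R, 0 < L.2 /\
    (cut_image k.1.1 (ratr k.1.2) !=set0 -> forall B, B `<=` K ->
     (forall i, (i <= L.1)%N -> B `&` slice K (mix_functional ((-1) ^+ k.1.1 \*: snd)
        ((S k.1).1 k.2 \o fst) (i%:R / L.1%:R)) L.2 !=set0) ->
     cut_hull B k.1.1 (ratr k.1.2) `&`
       slice (cut_image k.1.1 (ratr k.1.2)) ((S k.1).1 k.2) ((S k.1).2 k.2) !=set0).
  move=> [st n]; have [z_bdd eps_gt0] := (S_det st).1 n.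
  have [ne|empty] := pselect (cut_image st.1 (ratr st.2) !=set0); last first.
    by exists (0%N, 1); split=> // /empty.
  have [N [eta [eta_gt0 lift]]] := cut_slice_lift z_bdd eps_gt0 ne.
  by exists (N, eta); split=> // _.
(* The slice indexed by (sg, t, n, i) is the i-th grid slice lifting the n-th
   determining slice of [cut_image sg (ratr t)]. *)
exists (fun k : bool * rat * nat * nat => mix_functional ((-1) ^+ k.1.1.1 \*: snd)
    ((S k.1.1).1 k.1.2 \o fst) (k.2%:R / (L k.1).1%:R)),
  (fun k => (L k.1).2); split.
  move=> k; split; last by have [] := L_lift k.1.
  apply: bdd_mix_functional; first exact: bdd_l1_norm_sign_snd.
  by apply: bdd_l1_norm_comp_fst; have [] := (S_det k.1.1).1 k.1.2.
move=> B BK Bslices sg t.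
have [ne|empty] := pselect (cut_image sg (ratr t) !=set0); last first.
  by move=> y cut_y; exfalso; apply: empty; exists y.
apply: (S_det (sg, t)).2 => [|n]; first exact: cut_hull_sub.
by apply: (L_lift (sg, t, n)).2 => // i _; exact: Bslices (sg, t, n, i).
Qed.

Lemma op_sum_ball_sub_closed_conv_hull B : B `<=` K ->
  (forall sg (t : rat), cut_image sg (ratr t) `<=`
     closed_conv_hull (fun y : Y => `|y|) (cut_hull B sg (ratr t))) ->
  K `<=` closed_conv_hull (@l1_norm R Y) B.
Proof.
move=> BK cuts _ [x x1 <-] e e_gt0.
have e2_gt0 : 0 < e / 2 by lra.
have [q1] := @rat_in_itvoo R (xs x - e / 2) (xs x) ltac:(lra).
rewrite in_itv /= => /andP[q1_gt q1_lt].
have [q2] := @rat_in_itvoo R (- xs x - e / 2) (- xs x) ltac:(lra).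
rewrite in_itv /= => /andP[q2_gt q2_lt].
have cut1 : cut_image false (ratr q1) (T x) by exists x; rewrite //= expr0 scale1r.
have cut2 : cut_image true (ratr q2) (T x) by exists x; rewrite //= expr1 scaleN1r.
have [c1 hull_c1 c1_near] := cuts false q1 _ cut1 _ e2_gt0.
have [c2 hull_c2 c2_near] := cuts true q2 _ cut2 _ e2_gt0.
have C_convex (sg : bool) t :
    convex_set_in (conv_hull B `&` [set w : Y * R^o | t < (-1) ^+ sg *: w.2]).
  apply: convex_set_inI; first exact: conv_hull_convex.
  exact: (convex_set_in_gt (f := (-1) ^+ sg \*: snd)).
have [z1 [hull_z1 z1_gt] z1c1] := conv_hull_image (C_convex false (ratr q1)) hull_c1.
have [z2 [hull_z2 z2_gt] z2c2] := conv_hull_image (C_convex true (ratr q2)) hull_c2.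
move: z1_gt z2_gt; rewrite /= expr0 expr1 scale1r scaleN1r => z1_gt z2_gt.
have [z hull_z z_near] : exists2 z, conv_hull B z & l1_norm ((T x, xs x) - z) < e.
  by apply: (l1_norm_conv_approx (conv_hull_convex (B := B)) hull_z1 hull_z2);
    rewrite ?z1c1 ?z2c2 //; lra.
by exists z.
Qed.

End SumWithFunctional.

Theorem lemma5p12 (R : realType) (X Y : completeNormedModType R)
  (T : {linear X -> Y}) (xs : {linear X -> R^o}) :
  continuous T -> continuous xs ->
  hereditary_SCD_operator T ->
  SCD_operator (@l1_norm R Y) (op_sum T xs).
Proof.
move=> cT cxs hT; rewrite /SCD_operator.
have [f [eta [f_bdd slices_cuts]]] := op_sum_ball_slices cT cxs hT.
apply: (SCD_set_countable (true, 0%Q, 0%N, 0%N) _ _ f_bdd).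
- exact: op_sum_ball_convex.
- exact: op_sum_ball_bounded.
- move=> B BK Bslices.
  exact: op_sum_ball_sub_closed_conv_hull BK (slices_cuts B BK Bslices).
Qed.
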